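(* Let $\|\cdot\|$ be a strictly convex norm on $\mathbb R^2$ that is $C^1$ on $\mathbb R^2\setminus\{0\}$. Then $\mathrm c^{\mathrm{ENT}}(z^+,z^-)\le\Pi(z^+,z^-)$ for all distinct $z^+,z^-\in\partial\mathsf B$.
   Context: $\mathsf B=\{\|z\|<1\}$ normalized so that $\partial\mathsf B$ has length $2\pi$; $\gamma$ is its counterclockwise arc-length parametrization; $\mathbb R^2\cong\mathbb C$, $i$ = rotation by $\pi/2$. $\alpha$ is continuous with $\gamma'=e^{i\alpha}$, and $\Pi(\gamma(\theta_1),\gamma(\theta_2))=\int_{\theta_1}^{\theta_2}\int_{\theta_1}^{\theta_2}|\alpha(t)-\alpha(s)|\,dt\,ds$ for $|\theta_1-\theta_2|\le\pi$. For distinct $z^\pm$: $\nu=i\frac{z^+-z^-}{|z^+-z^-|}$ and $\mathrm c^{\mathrm{ENT}}(z^+,z^-)=\sup_{\lambda\in\Lambda_*}\int_{\theta^-}^{\theta^+}\lambda(t)\gamma'(t)\cdot\nu\,dt$ with $z^\pm=\gamma(\theta^\pm)$, $\Lambda_*=\{\lambda\in C^1(\mathbb R/2\pi\mathbb Z):\int_{\mathbb R/2\pi\mathbb Z}\lambda\gamma'=0,\ \|\lambda'\|_\infty\le1\}$. *)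

From Stdlib Require Import Reals.
From Coquelicot Require Import Coquelicot.
Open Scope R_scope.

Definition vsub (z w : R * R) : R * R := (fst z - fst w, snd z - snd w).
Definition dot (z w : R * R) : R := fst z * fst w + snd z * snd w.
Definition enorm (z : R * R) : R := sqrt (dot z z).
(* multiplication by i = rotation by pi/2 *)
Definition rot90 (z : R * R) : R * R := (- snd z, fst z).
Definition vadd (z w : R * R) : R * R := (fst z + fst w, snd z + snd w).
Definition vscal (c : R) (z : R * R) : R * R := (c * fst z, c * snd z).

Definition is_norm (N : R * R -> R) : Prop :=
  (forall z, N z = 0 <-> z = (0, 0)) /\
  (forall c z, N (vscal c z) = Rabs c * N z) /\
  (forall z w, N (vadd z w) <= N z + N w).

Definition strictly_convex (N : R * R -> R) : Prop :=
  forall z w t, N z = 1 -> N w = 1 -> z <> w -> 0 < t < 1 ->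
    N (vadd (vscal t z) (vscal (1 - t) w)) < 1.

Definition C1_away0 (N : R * R -> R) : Prop :=
  forall x y, (x, y) <> (0, 0) ->
    ex_derive (fun u => N (u, y)) x /\
    ex_derive (fun v => N (x, v)) y /\
    continuity_2d_pt (fun u v => Derive (fun u' => N (u', v)) u) x y /\
    continuity_2d_pt (fun u v => Derive (fun v' => N (u, v')) v) x y.

(* gamma : R -> R^2 is the counterclockwise arc-length parametrization of
   dB = {N z = 1}, with period 2*PI (this encodes the normalization
   "dB has length 2 pi"), and alpha is continuous with gamma' = e^{i alpha}. *)
Definition ccw_arclength_param (N : R * R -> R) (gamma : R -> R * R)
    (alpha : R -> R) : Prop :=
  (forall t, gamma (t + 2 * PI) = gamma t) /\
  (forall t, N (gamma t) = 1) /\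
  (forall z, N z = 1 -> exists t, 0 <= t < 2 * PI /\ gamma t = z) /\
  (forall t s, 0 <= t < 2 * PI -> 0 <= s < 2 * PI -> gamma t = gamma s -> t = s) /\
  (forall t, continuous alpha t) /\
  (forall t, is_derive (fun s => fst (gamma s)) t (cos (alpha t)) /\
             is_derive (fun s => snd (gamma s)) t (sin (alpha t))) /\
  (* counterclockwise orientation *)
  (forall t, 0 < fst (gamma t) * sin (alpha t) - snd (gamma t) * cos (alpha t)).

(* gamma'(t) = e^{i alpha(t)} *)
Definition dgamma (alpha : R -> R) (t : R) : R * R := (cos (alpha t), sin (alpha t)).

Definition Lambda_star (alpha : R -> R) (lam : R -> R) : Prop :=
  (forall t, lam (t + 2 * PI) = lam t) /\
  (forall t, ex_derive lam t) /\
  (forall t, continuous (Derive lam) t) /\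
  (forall t, Rabs (Derive lam t) <= 1) /\
  RInt (fun t => lam t * cos (alpha t)) 0 (2 * PI) = 0 /\
  RInt (fun t => lam t * sin (alpha t)) 0 (2 * PI) = 0.

Definition nu (zp zm : R * R) : R * R :=
  vscal (/ enorm (vsub zp zm)) (rot90 (vsub zp zm)).

Definition cENT (gamma : R -> R * R) (alpha : R -> R) (thp thm : R) : Rbar :=
  Lub_Rbar (fun v => exists lam, Lambda_star alpha lam /\
    v = RInt (fun t => lam t * dot (dgamma alpha t) (nu (gamma thp) (gamma thm))) thm thp).

Definition Pi_ent (alpha : R -> R) (th1 th2 : R) : R :=
  RInt (fun t => RInt (fun s => Rabs (alpha t - alpha s)) th1 th2) th1 th2.

From Stdlib Require Import Reals Lra.
From Coquelicot Require Import Coquelicot.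
Open Scope R_scope.

(* Write D(t) = gamma'(t).nu.  By the fundamental theorem of calculus,
   int_{th-}^{th+} D = (z+ - z-).nu = 0.  Hence int lam D = int (lam(t) - lam(th-)) D(t),
   where |lam(t) - lam(th-)| <= th+ - th- since |lam'| <= 1; and the zero mean also gives
   (th+ - th-) D(t) = int (D(t) - D(s)) ds, where |D(t) - D(s)| <= |alpha(t) - alpha(s)|
   since nu is a unit vector.  Integrating in t gives the bound by Pi. *)

Lemma Rabs_diff_le_of_derive_bound (f df : R -> R) (L : R) :
  (forall t, is_derive f t (df t)) -> (forall t, Rabs (df t) <= L) ->
  forall x y, Rabs (f x - f y) <= L * Rabs (x - y).
Proof.
  intros Hf Hdf x y.
  destruct (MVT_gen f y x df) as [c [_ ->]].
  - intros t _. apply Hf.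
  - intros t _. apply continuity_pt_filterlim, (ex_derive_continuous f).
    eexists; apply Hf.
  - rewrite Rabs_mult. apply Rmult_le_compat_r; [apply Rabs_pos | apply Hdf].
Qed.

Lemma dot_unit_Rabs_diff_le (n : R * R) : dot n n = 1 ->
  forall x y, Rabs (dot (cos x, sin x) n - dot (cos y, sin y) n) <= Rabs (x - y).
Proof.
  intros Hn x y. rewrite <- (Rmult_1_l (Rabs (x - y))).
  apply (Rabs_diff_le_of_derive_bound (fun u => dot (cos u, sin u) n)
           (fun u => dot (- sin u, cos u) n)).
  - intro t. unfold dot; simpl. auto_derive; [exact I | ring].
  - intro t. unfold dot in *; simpl in *.
    (* the derivative and the function are the coordinates of n in a rotated orthonormal frame *)
    assert (Hpyth : (- sin t * fst n + cos t * snd n) * (- sin t * fst n + cos t * snd n)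
                    + (cos t * fst n + sin t * snd n) * (cos t * fst n + sin t * snd n) = 1).
    { transitivity ((fst n * fst n + snd n * snd n) * (Rsqr (sin t) + Rsqr (cos t))).
      - unfold Rsqr. ring.
      - now rewrite Hn, sin2_cos2, Rmult_1_r. }
    set (d := - sin t * fst n + cos t * snd n) in *.
    assert (Hd2 : d * d <= 1).
    { pose proof (Rle_0_sqr (cos t * fst n + sin t * snd n)). unfold Rsqr in *. lra. }
    apply Rabs_le. split; nra.
Qed.

Lemma continuous_of_Rabs_diff_le (g h : R -> R) (c x : R) : continuous h x ->
  (forall y, Rabs (g y - g x) <= c * Rabs (h y - h x)) -> continuous g x.
Proof.
  intros Hh Hgh. apply filterlim_locally. intro eps.
  assert (Hc : 0 < Rabs c + 1) by (pose proof (Rabs_pos c); lra).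
  assert (Heps : 0 < eps / (Rabs c + 1)) by (apply Rdiv_lt_0_compat; [apply cond_pos | exact Hc]).
  eapply filter_imp; [| exact (proj1 (filterlim_locally h (h x)) Hh (mkposreal _ Heps))].
  intros y Hy. change (Rabs (g y - g x) < eps).
  change (Rabs (h y - h x) < eps / (Rabs c + 1)) in Hy.
  apply Rmult_lt_compat_l with (r := Rabs c + 1) in Hy; [| exact Hc].
  replace ((Rabs c + 1) * (eps / (Rabs c + 1))) with (pos eps) in Hy by (field; lra).
  pose proof (Rle_abs c). pose proof (Rabs_pos (h y - h x)). specialize (Hgh y). nra.
Qed.

Lemma ex_RInt_of_continuous (f : R -> R) (a b : R) :
  (forall t, continuous f t) -> ex_RInt f a b.
Proof. intro Hf. apply (ex_RInt_continuous (V := R_CompleteNormedModule)). intros; apply Hf. Qed.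

Lemma RInt_Rminus (f g : R -> R) (a b : R) : ex_RInt f a b -> ex_RInt g a b ->
  RInt (fun t => f t - g t) a b = RInt f a b - RInt g a b.
Proof. exact (RInt_minus (V := R_CompleteNormedModule) f g a b). Qed.

Lemma continuous_Rabs_diff (f : R -> R) (t : R) : (forall s, continuous f s) ->
  forall s, continuous (fun s => Rabs (f t - f s)) s.
Proof.
  intros Hf s. apply continuous_Rabs_comp.
  apply (continuous_minus (fun _ => f t) f); [apply continuous_const | apply Hf].
Qed.

Lemma continuous_RInt_Rabs_diff (f : R -> R) (a b x : R) : a <= b ->
  (forall t, continuous f t) -> continuous (fun t => RInt (fun s => Rabs (f t - f s)) a b) x.
Proof.
  intros Hab Hf.
  assert (Hint : forall t, ex_RInt (fun s => Rabs (f t - f s)) a b).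
  { intro t. now apply ex_RInt_of_continuous, continuous_Rabs_diff. }
  apply (continuous_of_Rabs_diff_le _ f (b - a)); [apply Hf |]. intro y.
  rewrite <- RInt_Rminus by apply Hint. apply abs_RInt_le_const; [exact Hab | |].
  - now apply (ex_RInt_minus (V := R_CompleteNormedModule)).
  - intros s _. replace (f y - f x) with ((f y - f s) - (f x - f s)) by ring.
    apply Rabs_triang_inv2.
Qed.

Lemma RInt_RInt_Rabs_diff_swap (f : R -> R) (a b : R) : (forall t, continuous f t) ->
  RInt (fun t => RInt (fun s => Rabs (f t - f s)) b a) b a
  = RInt (fun t => RInt (fun s => Rabs (f t - f s)) a b) a b.
Proof.
  intro Hf.
  assert (Hle : forall a b, a <= b ->
    RInt (fun t => RInt (fun s => Rabs (f t - f s)) b a) b a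
    = RInt (fun t => RInt (fun s => Rabs (f t - f s)) a b) a b).
  { clear a b. intros a b Hab.
    set (G := fun t => RInt (fun s => Rabs (f t - f s)) a b).
    assert (HG : ex_RInt G b a).
    { apply ex_RInt_of_continuous. intro t. now apply continuous_RInt_Rabs_diff. }
    rewrite (RInt_ext _ (fun t => opp (G t))).
    - rewrite (RInt_opp (V := R_CompleteNormedModule) G b a HG).
      exact (opp_RInt_swap (V := R_CompleteNormedModule) G b a HG).
    - intros t _. symmetry. apply (opp_RInt_swap (V := R_CompleteNormedModule)).
      now apply ex_RInt_of_continuous, continuous_Rabs_diff. }
  destruct (Rle_lt_dec a b) as [Hab | Hba].
  - now apply Hle.
  - symmetry. apply Hle. lra.
Qed.

Section ZeroMean.

Variables lam D f : R -> R.
Hypothesis lam_lipschitz : forall x y, Rabs (lam x - lam y) <= Rabs (x - y).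
Hypothesis f_continuous : forall t, continuous f t.
Hypothesis D_dominated : forall t s, Rabs (D t - D s) <= Rabs (f t - f s).

Let lam_continuous t : continuous lam t.
Proof.
  apply (continuous_of_Rabs_diff_le lam id 1); [apply continuous_id |].
  intro y. rewrite Rmult_1_l. apply lam_lipschitz.
Qed.

Let D_continuous t : continuous D t.
Proof.
  apply (continuous_of_Rabs_diff_le D f 1); [apply f_continuous |].
  intro y. rewrite Rmult_1_l. apply D_dominated.
Qed.

Let lam_D_integrable a b : ex_RInt (fun t => lam t * D t) a b.
Proof.
  apply ex_RInt_of_continuous. intro t.
  apply (continuous_mult lam D); [apply lam_continuous | apply D_continuous].
Qed.

Lemma RInt_mul_zero_mean (a b c : R) : RInt D a b = 0 ->
  RInt (fun t => lam t * D t) a b = RInt (fun t => (lam t - c) * D t) a b.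
Proof.
  intro D_mean0.
  rewrite (RInt_ext (V := R_CompleteNormedModule) (fun t => (lam t - c) * D t)
             (fun t => lam t * D t - c * D t)) by (intros; simpl; ring).
  assert (HD : ex_RInt D a b) by (apply ex_RInt_of_continuous, D_continuous).
  assert (HcD : RInt (fun t => c * D t) a b = c * RInt D a b)
    by exact (RInt_scal (V := R_CompleteNormedModule) D a b c HD).
  rewrite RInt_Rminus, HcD, D_mean0, Rmult_0_r, Rminus_0_r;
    [reflexivity | apply lam_D_integrable |].
  exact (ex_RInt_scal (V := R_CompleteNormedModule) D a b c HD).
Qed.

Lemma length_mul_Rabs_le (a b t : R) : a <= b -> RInt D a b = 0 ->
  (b - a) * Rabs (D t) <= RInt (fun s => Rabs (f t - f s)) a b.
Proof.
  intros a_le_b D_mean0.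
  assert (HDt : ex_RInt (fun _ => D t) a b)
    by (apply ex_RInt_of_continuous; intro; apply continuous_const).
  assert (HD : ex_RInt D a b) by (apply ex_RInt_of_continuous, D_continuous).
  assert (Hconst : RInt (fun _ => D t) a b = (b - a) * D t)
    by exact (RInt_const (V := R_CompleteNormedModule) a b (D t)).
  assert (E : (b - a) * D t = RInt (fun s => D t - D s) a b)
    by (rewrite RInt_Rminus, Hconst, D_mean0 by assumption; ring).
  rewrite <- (Rabs_right (b - a)), <- Rabs_mult, E by lra.
  assert (Hdiff : forall s, continuous (fun s => D t - D s) s).
  { intro s. apply (continuous_minus (fun _ => D t) D); [apply continuous_const | apply D_continuous]. }
  eapply Rle_trans; [apply abs_RInt_le; [exact a_le_b | now apply ex_RInt_of_continuous] |].
  apply RInt_le; [exact a_le_b | | |].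
  - apply ex_RInt_of_continuous. intro s. now apply continuous_Rabs_comp.
  - now apply ex_RInt_of_continuous, continuous_Rabs_diff.
  - intros s _. apply D_dominated.
Qed.

Lemma abs_RInt_mul_zero_mean_le_ordered (a b : R) : a <= b -> RInt D a b = 0 ->
  Rabs (RInt (fun t => lam t * D t) a b)
  <= RInt (fun t => RInt (fun s => Rabs (f t - f s)) a b) a b.
Proof.
  intros a_le_b D_mean0.
  assert (Hshift : forall t, continuous (fun t => (lam t - lam a) * D t) t).
  { intro t. apply (continuous_mult (fun t => lam t - lam a) D); [| apply D_continuous].
    apply (continuous_minus lam (fun _ => lam a)); [apply lam_continuous | apply continuous_const]. }
  rewrite (RInt_mul_zero_mean a b (lam a) D_mean0).
  eapply Rle_trans; [apply abs_RInt_le; [exact a_le_b | now apply ex_RInt_of_continuous] |].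
  apply RInt_le; [exact a_le_b | | |].
  - apply ex_RInt_of_continuous. intro t. now apply continuous_Rabs_comp.
  - apply ex_RInt_of_continuous. intro t. now apply continuous_RInt_Rabs_diff.
  - intros t Ht. eapply Rle_trans; [| apply (length_mul_Rabs_le a b t a_le_b D_mean0)].
    rewrite Rabs_mult. apply Rmult_le_compat_r; [apply Rabs_pos |].
    eapply Rle_trans; [apply lam_lipschitz |]. rewrite Rabs_right; lra.
Qed.

Lemma abs_RInt_mul_zero_mean_le (a b : R) : RInt D a b = 0 ->
  Rabs (RInt (fun t => lam t * D t) a b)
  <= RInt (fun t => RInt (fun s => Rabs (f t - f s)) a b) a b.
Proof.
  intro D_mean0.
  destruct (Rle_lt_dec a b) as [a_le_b | b_lt_a].
  - now apply abs_RInt_mul_zero_mean_le_ordered.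
  - rewrite <- (opp_RInt_swap (V := R_CompleteNormedModule) _ b a (lam_D_integrable b a)).
    rewrite (RInt_RInt_Rabs_diff_swap f b a f_continuous).
    change (Rabs (- RInt (fun t => lam t * D t) b a)
            <= RInt (fun t => RInt (fun s => Rabs (f t - f s)) b a) b a).
    rewrite Rabs_Ropp. apply abs_RInt_mul_zero_mean_le_ordered; [lra |].
    rewrite <- (opp_RInt_swap (V := R_CompleteNormedModule) D a b)
      by (apply ex_RInt_of_continuous, D_continuous).
    rewrite D_mean0. apply Ropp_0.
Qed.

End ZeroMean.

Lemma dot_vsub_nu (zp zm : R * R) : dot (vsub zp zm) (nu zp zm) = 0.
Proof. unfold dot, nu, vscal, rot90; simpl. ring. Qed.

Lemma dot_nu_nu (zp zm : R * R) : zp <> zm -> dot (nu zp zm) (nu zp zm) = 1.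
Proof.
  intro Hneq.
  assert (Hpos : 0 < dot (vsub zp zm) (vsub zp zm)).
  { destruct zp as [xp yp], zm as [xm ym]. unfold dot, vsub; simpl.
    destruct (Req_dec xp xm) as [-> | Hx].
    - assert (yp <> ym) by (intros ->; now apply Hneq).
      assert (0 < (yp - ym) * (yp - ym)) by (apply Rsqr_pos_lt; lra). lra.
    - assert (0 < (xp - xm) * (xp - xm)) by (apply Rsqr_pos_lt; lra).
      pose proof (Rle_0_sqr (yp - ym)). unfold Rsqr in *. lra. }
  unfold nu, enorm. revert Hpos. destruct (vsub zp zm) as [x y].
  unfold dot, vscal, rot90; simpl. intro Hpos.
  assert (Hsqrt := sqrt_sqrt _ (Rlt_le _ _ Hpos)).
  assert (Hsqrt_pos := sqrt_lt_R0 _ Hpos).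
  set (s := sqrt (x * x + y * y)) in *.
  replace (/ s * - y * (/ s * - y) + / s * x * (/ s * x)) with ((x * x + y * y) / (s * s))
    by (field; lra).
  rewrite Hsqrt. field. lra.
Qed.

Lemma RInt_dot_dgamma (gamma : R -> R * R) (alpha : R -> R) (w : R * R) (a b : R) :
  (forall t, continuous alpha t) ->
  (forall t, is_derive (fun s => fst (gamma s)) t (cos (alpha t)) /\
             is_derive (fun s => snd (gamma s)) t (sin (alpha t))) ->
  RInt (fun t => dot (dgamma alpha t) w) a b = dot (vsub (gamma b) (gamma a)) w.
Proof.
  intros alpha_cont gamma_deriv.
  apply is_RInt_unique.
  replace (dot (vsub (gamma b) (gamma a)) w)
    with (minus (dot (gamma b) w) (dot (gamma a) w))
    by (unfold minus, plus, opp, dot, vsub; simpl; ring).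
  apply (is_RInt_derive (fun s => dot (gamma s) w)).
  - intros t _. destruct (gamma_deriv t) as [Hx Hy].
    exact (is_derive_plus _ _ t _ _ (is_derive_scal_l _ t _ (fst w) Hx)
                                    (is_derive_scal_l _ t _ (snd w) Hy)).
  - intros t _. unfold dot, dgamma; simpl.
    apply (continuous_plus (fun t => cos (alpha t) * fst w) (fun t => sin (alpha t) * snd w)).
    + apply (continuous_mult (fun t => cos (alpha t)) (fun _ => fst w));
        [now apply continuous_cos_comp | apply continuous_const].
    + apply (continuous_mult (fun t => sin (alpha t)) (fun _ => snd w));
        [now apply continuous_sin_comp | apply continuous_const].
Qed.

Theorem lemma6p5 (N : R * R -> R) (gamma : R -> R * R) (alpha : R -> R) :
  is_norm N -> strictly_convex N -> C1_away0 N ->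
  ccw_arclength_param N gamma alpha ->
  forall thp thm : R, gamma thp <> gamma thm -> Rabs (thp - thm) <= PI ->
    Rbar_le (cENT gamma alpha thp thm) (Finite (Pi_ent alpha thp thm)).
Proof.
  intros _ _ _ (_ & _ & _ & _ & alpha_cont & gamma_deriv & _) thp thm Hneq _.
  set (n := nu (gamma thp) (gamma thm)).
  assert (D_mean0 : RInt (fun t => dot (dgamma alpha t) n) thm thp = 0)
    by (rewrite (RInt_dot_dgamma gamma) by assumption; apply dot_vsub_nu).
  apply (proj2 (Lub_Rbar_correct _)).
  intros v (lam & (_ & lam_deriv & _ & lam_bound & _) & ->). simpl.
  unfold Pi_ent. rewrite RInt_RInt_Rabs_diff_swap by exact alpha_cont.
  eapply Rle_trans; [apply Rle_abs |].
  apply (abs_RInt_mul_zero_mean_le lam _ alpha); [| exact alpha_cont | | exact D_mean0].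
  - intros x y. rewrite <- (Rmult_1_l (Rabs (x - y))).
    apply (Rabs_diff_le_of_derive_bound lam (Derive lam)); [| exact lam_bound].
    intro t. now apply Derive_correct.
  - intros t s. now apply dot_unit_Rabs_diff_le, dot_nu_nu.
Qed.
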